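(* Let $\pi\in\mathfrak{S}_n$ have disjoint cycles of lengths $\ell_1,\dots,\ell_m$ (fixed points included). In $\textsf{Star}(n)$, the number of elements covered by $\pi$ is $\sum_{1\le i<j\le m}\ell_i\ell_j$, and the number of elements covering $\pi$ is $\sum_{i=1}^m\binom{\ell_i}{2}$.
   Context: $\mathfrak{S}_n$ is the symmetric group on $[n]$, products taken right to left. For a pivot $k\in[n]$, a star factorization of $\pi$ is $\pi=g_1\cdots g_r$ with each $g_i$ a transposition $(k\ i)$, $i\neq k$; it is transitive if all $(k\ i)$, $i\in[n]\setminus\{k\}$, occur; $\star_k(\pi)$ is the set of transitive star factorizations of $\pi$ of minimum length $n+m-2$ ($m$ = number of cycles of $\pi$). $\sigma\preceq_k\pi$ means some $\gamma\in\star_k(\sigma)$ is a not necessarily contiguous subword of some $\delta\in\star_k(\pi)$. This relation does not depend on $k$; it is denoted $\preceq$, and $\textsf{Star}(n)$ is the resulting poset on $\mathfrak{S}_n$. $\tau$ covers $\sigma$ if $\sigma\preceq\tau$, $\sigma\neq\tau$, and there is no $\rho\notin\{\sigma,\tau\}$ with $\sigma\preceq\rho\preceq\tau$. *)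

From mathcomp Require Import all_boot all_fingroup.
From mathcomp Require Import boolp.

Set Implicit Arguments.
Unset Strict Implicit.
Unset Printing Implicit Defensive.

Local Open Scope group_scope.

(* A word w = [:: i_1; ...; i_r] over 'I_n encodes the product
   g_1 g_2 ... g_r of the transpositions g_j = (k i_j), products taken
   right to left (g_r is applied first).  In mathcomp, (p * q) x = q (p x),
   so g_1 \circ ... \circ g_r is g_r * ... * g_1. *)
Fixpoint star_prod (n : nat) (k : 'I_n) (w : seq 'I_n) : 'S_n :=
  match w with
  | [::] => 1
  | i :: w' => star_prod k w' * tperm k i
  end.

Definition ncycles (n : nat) (pi : 'S_n) : nat := #|porbits pi|.

Definition star_fact (n : nat) (k : 'I_n) (pi : 'S_n) (w : seq 'I_n) : Prop :=
  all (fun i => i != k) w /\ star_prod k w = pi.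

Definition transitive_star (n : nat) (k : 'I_n) (w : seq 'I_n) : Prop :=
  forall i : 'I_n, i != k -> i \in w.

Definition in_star (n : nat) (k : 'I_n) (pi : 'S_n) (w : seq 'I_n) : Prop :=
  [/\ star_fact k pi w, transitive_star k w & size w = n + ncycles pi - 2].

Definition star_le (n : nat) (k : 'I_n) (sigma pi : 'S_n) : Prop :=
  exists g d : seq 'I_n, [/\ in_star k sigma g, in_star k pi d & subseq g d].

Definition star_covers (n : nat) (k : 'I_n) (tau sigma : 'S_n) : Prop :=
  [/\ star_le k sigma tau, sigma <> tau &
      ~ exists rho : 'S_n, [/\ rho <> sigma, rho <> tau,
                               star_le k sigma rho & star_le k rho tau]].

Definition cycle_lengths (n : nat) (pi : 'S_n) : seq nat :=
  map (fun c : {set 'I_n} => #|c|) (enum (porbits pi)).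

From mathcomp Require Import all_boot all_fingroup.
From mathcomp Require Import boolp.
From mathcomp Require Import zify.

(* Write P w for the product of the star transpositions of a word w and m(s)
   for the number of cycles of s.  The proof rests on four facts.
   1. Word surgery: inserting a letter into w multiplies P w on the left by a
      transposition (x y), where x may be any letter of w or the pivot and y
      is arbitrary; deleting a letter also multiplies by a transposition.
      Since m((x y) s) = m(s) +- 1, deleting letters from a word changes m by
      at most the number of deleted letters.
   2. Grading: hence sigma <= tau forces m(sigma) <= m(tau), with equality
      only for sigma = tau.
   3. Existence: every permutation has a minimal transitive star
      factorization (first for n-cycles, then by splitting cycles).
   4. Covers: tau covers sigma iff sigma = (x y) tau with x, y in different
      cycles of tau.
   The theorem then counts transpositions: sigma covered by pi correspond to
   pairs of points in different cycles of pi, tau covering pi to pairs of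
   distinct points in a common cycle of pi. *)

Set Implicit Arguments.
Unset Strict Implicit.
Unset Printing Implicit Defensive.
Local Open Scope group_scope.

Lemma subseq_delete (T : eqType) (g d : seq T) :
  subseq g d -> size g < size d ->
  exists u a v, d = u ++ a :: v /\ subseq g (u ++ v).
Proof.
elim: d g => [|b d IH] [|c g] //=.
  by move=> _ _; exists [::], b, d; rewrite sub0seq.
case: eqP => [-> | _] gd lt_gd; last by exists [::], b, d.
have [u [a [v [-> gd']]]] := IH g gd lt_gd.
by exists (b :: u), a, v; rewrite /= eqxx.
Qed.

Lemma porbit_fixpoint (T : finType) (s : {perm T}) x y :
  s x = x -> y \in porbit s x -> y = x.
Proof.
move=> sx /porbitP[i ->]; elim: i => [|i IH]; first by rewrite expg0 perm1.
by rewrite expgSr permM IH sx.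
Qed.

Section StarWords.
Variables (n : nat) (k : 'I_n).
Local Notation P := (star_prod k).
Local Notation avoids_pivot w := (all (fun i => i != k) w).

Lemma star_prod_cat u v : P (u ++ v) = P v * P u.
Proof. by elim: u => [|i u IH] /=; [rewrite mulg1 | rewrite IH mulgA]. Qed.

Lemma star_prod_fix w z : z != k -> z \notin w -> P w z = z.
Proof.
elim: w => [|b w IH] /= zk; first by rewrite perm1.
rewrite inE negb_or => /andP[zb zw].
by rewrite permM IH // tpermD // eq_sym.
Qed.

Lemma star_prod_moves w z :
  uniq w -> avoids_pivot w -> z \in w -> P w z != z.
Proof.
elim: w => [|b w IH] //= /andP[bw uw] /andP[bk wk].
rewrite inE permM; case: (eqVneq z b) => [-> _ | zb /= zw].
  by rewrite star_prod_fix // tpermR eq_sym.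
have zk : z != k by move/allP: wk => /(_ z zw).
have := IH uw wk zw; set y := P w z => yz.
by case: tpermP => [_|_|//]; rewrite ?(eq_sym k) // eq_sym.
Qed.

Lemma pivot_suffix w x : (x == k) || (x \in w) ->
  exists u v, w = u ++ v /\ P v x = k.
Proof.
elim: w => [|b w IH] /=.
  by rewrite orbF => /eqP ->; exists [::], [::]; rewrite perm1.
case: (boolP ((x == k) || (x \in w))) => [xw _ | xw xbw].
  by have [u [v [-> vx]]] := IH xw; exists (b :: u), v.
exists [::], (b :: w); split => //=.
move: xw xbw; rewrite inE negb_or => /andP[xk xw]; rewrite (negPf xk) /=.
case/orP => [/eqP xb|]; last by rewrite (negPf xw).
by rewrite permM star_prod_fix -?xb // tpermR.
Qed.

Lemma star_prod_insert w x y : x != y -> (x == k) || (x \in w) ->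
  exists u a v, [/\ w = u ++ v, a != k & P (u ++ a :: v) = tperm x y * P w].
Proof.
move=> xy xw; have [u [v [-> vx]]] := pivot_suffix xw.
exists u, (P v y), v; split => //.
  by apply: contra xy => /eqP vy; apply/eqP/(@perm_inj _ (P v)); rewrite vy.
have conj_t : tperm k (P v y) = tperm x y ^ P v by rewrite tpermJ vx.
rewrite !star_prod_cat /= conj_t conjgE !mulgA mulgV mul1g.
by rewrite -!mulgA.
Qed.

Lemma star_prod_delete u a v : a != k -> exists x y,
  x != y /\ P (u ++ v) = tperm x y * P (u ++ a :: v).
Proof.
move=> ak; exists ((P v)^-1 k), ((P v)^-1 a); split.
  by rewrite (inj_eq perm_inj) eq_sym.
have conj_t : tperm ((P v)^-1 k) ((P v)^-1 a) = tperm k a ^ (P v)^-1.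
  by rewrite tpermJ.
rewrite !star_prod_cat /= conj_t conjgE invgK !mulgA.
rewrite -(mulgA _ (P v)^-1) mulVg mulg1.
by rewrite -(mulgA (P v) (tperm k a)) tperm2 mulg1.
Qed.

End StarWords.

Section Grading.
Variables (n : nat) (k : 'I_n).
Local Notation P := (star_prod k).
Local Notation m := (@ncycles n).
Local Notation avoids_pivot w := (all (fun i => i != k) w).

(* Multiplying by a transposition merges (- 1) or splits (+ 1) cycles. *)
Lemma ncycles_tperm (s : 'S_n) x y : x != y ->
  m (tperm x y * s) + (x \notin porbit s y).*2 = m s + 1.
Proof. by move=> xy; rewrite /ncycles porbits_mul_tperm xy. Qed.

Lemma merge_cycles (s : 'S_n) x y : x \notin porbit s y ->
  m (tperm x y * s) + 1 = m s.
Proof.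
move=> xsy; have xy : x != y by apply: contra xsy => /eqP ->; apply: porbit_id.
by have := ncycles_tperm s xy; rewrite xsy /=; lia.
Qed.

Lemma split_cycle (s : 'S_n) x y : x \in porbit s y -> x != y ->
  m (tperm x y * s) = m s + 1.
Proof. by move=> xsy xy; have := ncycles_tperm s xy; rewrite xsy /= addn0. Qed.

Lemma merge_then_split (s : 'S_n) x y : x \notin porbit s y ->
  x \in porbit (tperm x y * s) y.
Proof.
move=> xsy; have xy : x != y by apply: contra xsy => /eqP ->; apply: porbit_id.
have := merge_cycles xsy; have := ncycles_tperm (tperm x y * s) xy.
by rewrite tpermKg; case: (x \in porbit _ y) => //=; lia.
Qed.

Lemma split_then_merge (s : 'S_n) x y : x \in porbit s y -> x != y ->
  x \notin porbit (tperm x y * s) y.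
Proof.
move=> xsy xy; have := split_cycle xsy xy.
have := ncycles_tperm (tperm x y * s) xy.
by rewrite tpermKg; case: (x \in porbit _ y) => //=; lia.
Qed.

Lemma ord_size_gt0 : 0 < n.
Proof. by case: n k => [[]|]. Qed.

Lemma ncycles_gt0 (s : 'S_n) : 0 < m s.
Proof. by rewrite /ncycles card_gt0; apply/set0Pn; exists (porbit s k); apply: imset_f. Qed.

Lemma ncycles_subseq (d g : seq 'I_n) : subseq g d -> avoids_pivot d ->
  m (P d) + size g <= m (P g) + size d.
Proof.
have [N] := ubnP (size d); elim: N d g => // N IH d g /ltnSE-dN gd dk.
have [lt_gd | ge_gd] := ltnP (size g) (size d); last first.
  have /eqP-> // : g == d.
  by rewrite -(size_subseq_leqif gd).2 eqn_leq ge_gd size_subseq.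
have [u [a [v [Ed gd']]]] := subseq_delete gd lt_gd; subst d.
move: dk; rewrite all_cat /= => /and3P[uk ak vk].
have uvk : avoids_pivot (u ++ v) by rewrite all_cat uk.
have uvN : size (u ++ v) < N by move: dN; rewrite !size_cat /=; lia.
have := IH _ _ uvN gd' uvk.
have [x [y [xy del]]] := star_prod_delete u v ak.
have := ncycles_tperm (P (u ++ a :: v)) xy; rewrite -del !size_cat /=.
by case: (x \notin _) => /=; lia.
Qed.

Lemma star_le_grade (s r : 'S_n) :
  star_le k s r -> m s <= m r /\ (m s = m r -> s = r).
Proof.
case=> g [d [[[_ Pg] _ sz_g] [[_ Pd] _ sz_d] gd]].
have := size_subseq gd; rewrite sz_g sz_d => le_gd.
have := ord_size_gt0; have := ncycles_gt0 s; have := ncycles_gt0 r => ? ? ?.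
split=> [|msr]; first by lia.
have /eqP gd_eq : g == d by rewrite -(size_subseq_leqif gd).2 sz_g sz_d msr.
by rewrite -Pg -Pd gd_eq.
Qed.

End Grading.

Section Existence.
Variables (n : nat) (k : 'I_n).
Local Notation P := (star_prod k).
Local Notation m := (@ncycles n).
Local Notation avoids_pivot w := (all (fun i => i != k) w).

Definition moved (s : 'S_n) : {set 'I_n} := [set z | (z != k) && (s z != z)].

(* If s fixes the pivot but moves some point, then the fixed points and a
   moved point lie in distinct cycles, so m(s) exceeds the number of fixed
   points. *)
Lemma fixed_pivot_ncycles (s : 'S_n) :
  s k = k -> moved s != set0 -> n < m s + #|moved s|.
Proof.
move=> sk /set0Pn[z0 z0_moved].
set F := [set z | s z == z].
have F_compl : F = ~: moved s.
  apply/setP => z; rewrite !inE negb_and !negbK.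
  by case: (eqVneq z k) => [->|] /=; rewrite ?sk ?eqxx.
have porbit_inj : {in z0 |: F &, injective (porbit s)}.
  move=> x y; rewrite !inE => /orP[/eqP-> | /eqP sx] /orP[/eqP-> | /eqP sy] //.
  - by move=> E; apply: (porbit_fixpoint sy); rewrite -E porbit_id.
  - by move=> E; apply: esym; apply: (porbit_fixpoint sx); rewrite E porbit_id.
  - by move=> E; apply: (porbit_fixpoint sy); rewrite -E porbit_id.
have : #|porbit s @: (z0 |: F)| <= m s.
  by apply: subset_leq_card; apply/subsetP => _ /imsetP[x _ ->]; apply: imset_f.
rewrite card_in_imset // cardsU1 F_compl cardsCs card_ord inE z0_moved setCK.
by have := subset_leq_card (subsetT (moved s)); rewrite cardsT card_ord; lia.
Qed.

Lemma detach_pivot_preimage (s : 'S_n) : s k != k ->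
  let a := s^-1 k in
  m (s * tperm k a) = m s + 1 /\ moved (s * tperm k a) = moved s :\ a.
Proof.
move=> sk a; have sa : s a = k by rewrite permKV.
have ak : a != k by apply: contra sk => /eqP E; rewrite -[X in s X]E sa.
split.
  have -> : m (s * tperm k a) = m (tperm k a * s^-1).
    by rewrite /ncycles -porbitsV invMg tpermV.
  have -> : m s = m s^-1 by rewrite /ncycles porbitsV.
  apply: split_cycle; last by rewrite eq_sym.
  by rewrite porbitV; have := mem_porbit s 1 a; rewrite expg1 sa.
apply/setP => z; rewrite !inE permM.
case: tpermP => [sz_k | sz_a | sz_k sz_a].
- have -> : z = a by apply: (@perm_inj _ s); rewrite sz_k sa.
  by rewrite eqxx andbF.
- have za : z != a by apply/eqP => za; move: ak; rewrite -sz_a za sa eqxx.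
  by rewrite za sz_a !(eq_sym _ z) za; case: (z != k).
- by have -> // : z != a by apply: contra_not_neq sz_k => ->.
Qed.

(* A permutation whose moved points all lie in the cycle of the pivot --
   encoded by the extremal cycle count m(s) + #|moved s| = n -- is the star
   product of a duplicate-free word. *)
Lemma single_cycle_word (s : 'S_n) : m s + #|moved s| = n ->
  exists w, [/\ uniq w, avoids_pivot w & P w = s].
Proof.
move Ej : #|moved s| => j; elim: j s Ej => [|j IH] s Ej ms.
  have fixed z : z != k -> s z = z.
    move=> zk; apply/eqP; apply: contraT => szz.
    by move/eqP: Ej; rewrite cards_eq0 => /eqP/setP/(_ z); rewrite !inE zk szz.
  have sk : s k = k by case: (eqVneq (s k) k) => // /fixed/perm_inj.
  exists [::]; split => //=; apply/permP => z; rewrite perm1.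
  by case: (eqVneq z k) => [->|/fixed->].
have sk : s k != k.
  apply/negP => /eqP sk; have := fixed_pivot_ncycles sk.
  by rewrite -card_gt0 Ej ms ltnn => /(_ isT).
have [ms' moved'] := detach_pivot_preimage sk.
set a := s^-1 k in ms' moved'.
have sa : s a = k by rewrite permKV.
have ak : a != k by apply: contra sk => /eqP E; rewrite -[X in s X]E sa.
have a_moved : a \in moved s by rewrite inE ak sa eq_sym ak.
have Ej' : #|moved (s * tperm k a)| = j.
  by move: Ej; rewrite moved' (cardsD1 a) a_moved => -[].
have [w' [uw' w'k Pw']] : exists w', [/\ uniq w', avoids_pivot w' &
    P w' = s * tperm k a] by apply: (IH _ Ej'); rewrite ms'; lia.
have aw' : a \notin w'.
  apply/negP => /(star_prod_moves uw' w'k).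
  by rewrite Pw' permM sa tpermL eqxx.
exists (a :: w'); split; rewrite /= ?aw' ?uw' ?ak //.
by rewrite Pw' -mulgA tperm2 mulg1.
Qed.

(* An n-cycle has a minimal transitive star factorization: the duplicate-free
   word of single_cycle_word, which must contain every non-pivot point. *)
Lemma full_cycle_star (s : 'S_n) : m s = 1%N -> exists w, in_star k s w.
Proof.
move=> ms1.
have moves z : z != k -> s z != z.
  move=> zk; apply/negP => /eqP sz.
  suff : (1 < m s)%N by rewrite ms1.
  apply/card_gt1P; exists (porbit s z), (porbit s k); split; try exact: imset_f.
  rewrite eq_porbit_mem porbit_sym; apply/negP => /(porbit_fixpoint sz) kz.
  by rewrite kz eqxx in zk.
have moved_all : moved s = [set~ k].
  by apply/setP => z; rewrite !inE; case: (eqVneq z k) => //= /moves.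
have n_gt0 := ord_size_gt0 k.
have [|w [uw wk Pw]] := @single_cycle_word s.
  by rewrite moved_all cardsC1 card_ord ms1; lia.
have w_mem z : (z \in w) = (z != k).
  apply/idP/idP; first by move/allP: wk => /(_ z).
  move=> zk; apply: contraT => zw.
  by have := star_prod_fix zk zw; rewrite Pw => /eqP; rewrite (negPf (moves z zk)).
exists w; split; [by [] | by move=> z; rewrite w_mem |].
have : #|w| = #|[set~ k]| by apply: eq_card => z; rewrite in_setC1 w_mem.
by rewrite cardsC1 card_ord (card_uniqP uw) ms1 => ->; lia.
Qed.

Lemma star_insert (s : 'S_n) x y g : in_star k s g ->
  x \in porbit s y -> x != y ->
  exists d, in_star k (tperm x y * s) d /\ subseq g d.
Proof.
case=> [[gk Pg] g_trans sz_g] xsy xy.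
have xg : (x == k) || (x \in g) by case: (eqVneq x k) => //= /g_trans.
have [u [a [v [Eg ak Pd]]]] := star_prod_insert xy xg.
have g_sub : subseq g (u ++ a :: v).
  by rewrite Eg; apply: cat_subseq (subseq_refl u) (subseq_cons v a).
exists (u ++ a :: v); split => //; split.
- split; last by rewrite Pd Pg.
  by move: gk; rewrite Eg !all_cat /= ak.
- by move=> i /g_trans; apply: (mem_subseq g_sub).
- move: sz_g; rewrite Eg !size_cat /= (split_cycle xsy xy).
  by have := ord_size_gt0 k; have := ncycles_gt0 k s; rewrite /ncycles; lia.
Qed.

(* Every permutation has a minimal transitive star factorization: merge two
   cycles, factor the result by induction, and split them again. *)
Lemma star_exists (s : 'S_n) : exists w, in_star k s w.
Proof.
have [N] := ubnP (m s); elim: N s => // N IH s /ltnSE-msN.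
have [/full_cycle_star // | ms1] := eqVneq (m s) 1%N.
have : (1 < m s)%N by have := ncycles_gt0 k s; lia.
case/card_gt1P => _ [_ [/imsetP[x _ ->] /imsetP[y _ ->] neq]].
have xsy : x \notin porbit s y by rewrite -eq_porbit_mem.
have xy : x != y by apply: contra xsy => /eqP ->; apply: porbit_id.
have [|g star_g] := IH (tperm x y * s); first by have := merge_cycles xsy; lia.
have [d [star_d _]] := star_insert star_g (merge_then_split xsy) xy.
by exists d; rewrite tpermKg in star_d.
Qed.

End Existence.

Section Covers.
Variables (n : nat) (k : 'I_n).
Local Notation m := (@ncycles n).
Local Notation avoids_pivot w := (all (fun i => i != k) w).

(* Any strict relation s < t factors through an element (x y) t obtained by
   merging two cycles of t: delete from a factorization of t one letter that
   is not kept in the factorization of s. *)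
Lemma star_lt_merge (s t : 'S_n) : star_le k s t -> s <> t ->
  exists x y, [/\ x \notin porbit t y,
    star_le k s (tperm x y * t) & star_le k (tperm x y * t) t].
Proof.
case=> g [d [star_g star_d gd]] st.
have [[[_ Pg] g_trans sz_g] [[dk Pd] _ sz_d]] := (star_g, star_d).
have [lt_gd | ge_gd] := ltnP (size g) (size d); last first.
  have /eqP gd_eq : g == d.
    by rewrite -(size_subseq_leqif gd).2 eqn_leq ge_gd size_subseq.
  by case: st; rewrite -Pg -Pd gd_eq.
have [u [a [v [Ed g_uv]]]] := subseq_delete gd lt_gd.
move: dk; rewrite Ed all_cat /= => /and3P[uk ak vk].
have uvk : avoids_pivot (u ++ v) by rewrite all_cat uk.
have [x [y [xy Puv]]] := star_prod_delete u v ak.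
rewrite -Ed Pd in Puv.
have n_gt0 := ord_size_gt0 k; have ms_gt0 := ncycles_gt0 k s.
have merge : m (tperm x y * t) + 1 = m t.
  have := ncycles_subseq g_uv uvk; rewrite Puv Pg; have := ncycles_tperm t xy.
  rewrite size_cat; rewrite Ed !size_cat /= in sz_d.
  rewrite /ncycles in ms_gt0 sz_g sz_d *; case: (x \notin _); lia.
have star_uv : in_star k (tperm x y * t) (u ++ v).
  split; [by [] | by move=> i /g_trans; apply: (mem_subseq g_uv) |].
  by move: sz_d; rewrite Ed !size_cat /=; rewrite /ncycles in merge *; lia.
exists x, y; split.
- by have := ncycles_tperm t xy; case: (x \notin _) => //=; lia.
- by exists g, (u ++ v).
- exists (u ++ v), d; split => //.
  by rewrite Ed; apply: cat_subseq (subseq_refl u) (subseq_cons v a).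
Qed.

Lemma covers_merge (t s : 'S_n) : star_covers k t s ->
  exists x y, s = tperm x y * t /\ x \notin porbit t y.
Proof.
case=> st s_neq_t no_between.
have [x [y [xty s_rho rho_t]]] := star_lt_merge st s_neq_t.
exists x, y; split => //.
apply: contra_not_eq no_between => /eqP s_neq_rho.
exists (tperm x y * t); split=> //; first by move/esym.
by move=> rho_eq_t; have := merge_cycles xty; rewrite rho_eq_t; lia.
Qed.

(* Conversely every such (x y) t is covered by t, since the cycle count
   drops by exactly one. *)
Lemma merge_covers (t : 'S_n) x y : x \notin porbit t y ->
  star_covers k t (tperm x y * t).
Proof.
move=> xty; have xy : x != y by apply: contra xty => /eqP ->; apply: porbit_id.
have [g star_g] := star_exists k (tperm x y * t).
have [d [star_d gd]] := star_insert star_g (merge_then_split xty) xy.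
rewrite tpermKg in star_d.
have merge := merge_cycles xty.
split; [by exists g, d | by move=> E; move: merge; rewrite E; lia |].
case=> r [r_neq_s r_neq_t s_r r_t].
have [le_sr eq_sr] := star_le_grade s_r; have [le_rt eq_rt] := star_le_grade r_t.
have [lt_sr | gt_sr | eq_sr_m] := ltngtP (m (tperm x y * t)) (m r).
- by apply: r_neq_t; apply: eq_rt; lia.
- by move: gt_sr; rewrite ltnNge le_sr.
- by apply: r_neq_s; rewrite (eq_sr eq_sr_m).
Qed.

End Covers.

Section TranspositionCounting.
Variable n : nat.
Local Notation T := 'I_n.

Lemma tperm_ord_inj (x1 y1 x2 y2 : T) : x1 < y1 -> x2 < y2 ->
  tperm x1 y1 = tperm x2 y2 -> x1 = x2 /\ y1 = y2.
Proof.
move=> lt1 lt2 E.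
have x1_to_y1 : tperm x2 y2 x1 = y1 by rewrite -E tpermL.
have ex : x1 = x2.
  move: x1_to_y1; case: tpermP => [// | e1 e2 | _ _ e].
  - by move: lt1 lt2; rewrite e1 -e2; lia.
  - by move: lt1; rewrite e ltnn.
by subst x2; split => //; rewrite -(tpermL x1 y1) E tpermL.
Qed.

Section SymmetricRelation.
Variable R : rel T.
Hypotheses (R_sym : symmetric R) (R_irr : irreflexive R).

Definition ordered_pairs : {set T * T} := [set p | R p.1 p.2 && (p.1 < p.2)].

Lemma card_related_pairs :
  #|[set p : T * T | R p.1 p.2]| = #|ordered_pairs|.*2.
Proof.
pose swap (p : T * T) := (p.2, p.1).
have swap_inj : injective swap by move=> [? ?] [? ?] [-> ->].
have split_pairs : [set p : T * T | R p.1 p.2] = ordered_pairs :|: swap @: ordered_pairs.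
  apply/setP => [[x y]]; rewrite !inE /=; apply/idP/orP.
  - move=> Rxy; case: (ltngtP x y) => cmp.
    + by left; rewrite Rxy.
    + by right; apply/imsetP; exists (y, x); rewrite // inE /= R_sym Rxy.
    + by move/val_inj: cmp => E; rewrite E R_irr in Rxy.
  - case=> [/andP[] // | /imsetP[[a b]]].
    by rewrite inE /= => /andP[Rab _] [-> ->]; rewrite R_sym.
have disjoint_halves : ordered_pairs :&: swap @: ordered_pairs = set0.
  apply/setP => [[x y]]; rewrite !inE /=; apply/negP.
  case/andP=> /andP[_ lt_xy] /imsetP[[a b]]; rewrite inE /= => /andP[_ lt_ab].
  by case=> ex ey; subst; lia.
by rewrite split_pairs cardsU card_imset // disjoint_halves cards0 subn0 addnn.
Qed.

Lemma card_tperm_image (s : 'S_n) :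
  (#|[set tperm p.1 p.2 * s | p in [set p : T * T | R p.1 p.2]]|).*2
  = \sum_(x : T) #|[set y | R x y]|.
Proof.
set f := fun p : T * T => tperm p.1 p.2 * s.
have same_image : f @: [set p : T * T | R p.1 p.2] = f @: ordered_pairs.
  apply/eqP; rewrite eqEsubset; apply/andP; split; last first.
    by apply: imsetS; apply/subsetP => p; rewrite !inE => /andP[].
  apply/subsetP => _ /imsetP[[x y] Rxy ->]; rewrite inE /= in Rxy.
  case: (ltngtP x y) => cmp.
  - by apply: imset_f; rewrite inE /= Rxy cmp.
  - apply/imsetP; exists (y, x); last by rewrite /f /= tpermC.
    by rewrite inE /= R_sym Rxy.
  - by move/val_inj: cmp => E; rewrite E R_irr in Rxy.
have f_inj : {in ordered_pairs &, injective f}.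
  move=> [x1 y1] [x2 y2]; rewrite !inE /= => /andP[_ lt1] /andP[_ lt2] /mulIg E.
  by have [-> ->] := tperm_ord_inj lt1 lt2 E.
rewrite same_image card_in_imset // -card_related_pairs -sum1_card.
rewrite (eq_bigr (fun x => \sum_(y | R x y) 1)) => [|x _]; last first.
  by rewrite sum1dep_card.
by rewrite pair_big_dep; apply: eq_bigl => p; rewrite inE.
Qed.

End SymmetricRelation.

Lemma sum_over_cycles (s : 'S_n) (F : nat -> nat) :
  \sum_(c in porbits s) F #|c| * #|c| = \sum_(x : T) F #|porbit s x|.
Proof.
rewrite [RHS](partition_big_imset (porbit s)) /=.
apply: eq_bigr => _ /imsetP[z _ ->].
rewrite (eq_bigr (fun _ => F #|porbit s z|)) => [|x /eqP-> //].
rewrite (eq_bigl (mem (porbit s z))) => [|x]; last by rewrite eq_porbit_mem.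
by rewrite sum_nat_const mulnC.
Qed.

Lemma sum_cycle_lengths (s : 'S_n) (G : nat -> nat) :
  \sum_(i < size (cycle_lengths s)) G (nth 0 (cycle_lengths s) i)
  = \sum_(c in porbits s) G #|c|.
Proof.
rewrite -(big_mkord xpredT (fun i => G (nth 0 (cycle_lengths s) i))).
by rewrite -(big_nth 0 xpredT G) big_map big_enum.
Qed.

Lemma cycle_lengths_total (s : 'S_n) :
  \sum_(i < size (cycle_lengths s)) nth 0 (cycle_lengths s) i = n.
Proof.
rewrite (sum_cycle_lengths s id).
transitivity (\sum_(x : T) 1)%N; last by rewrite sum_nat_const card_ord muln1.
by rewrite -(sum_over_cycles s (fun _ => 1%N)); apply: eq_bigr => c _; rewrite mul1n.
Qed.

End TranspositionCounting.

Section CoverSets.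
Variables (n : nat) (k : 'I_n).

Lemma covered_set (pi : 'S_n) :
  [set sigma : 'S_n | `[< star_covers k pi sigma >]] =
  [set tperm p.1 p.2 * pi | p in [set p : 'I_n * 'I_n | p.1 \notin porbit pi p.2]].
Proof.
apply/setP => s; rewrite inE; apply/asboolP/imsetP.
- by case/covers_merge => x [y [-> xpy]]; exists (x, y); rewrite ?inE.
- by case=> [[x y]]; rewrite inE /= => xpy ->; apply: merge_covers.
Qed.

Lemma covering_set (pi : 'S_n) :
  [set tau : 'S_n | `[< star_covers k tau pi >]] =
  [set tperm p.1 p.2 * pi | p in [set p : 'I_n * 'I_n |
                                  (p.1 \in porbit pi p.2) && (p.1 != p.2)]].
Proof.
apply/setP => t; rewrite inE; apply/asboolP/imsetP.
- case/covers_merge => x [y [pi_eq xty]]; exists (x, y); last first.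
    by rewrite pi_eq tpermKg.
  have xy : x != y by apply: contra xty => /eqP ->; apply: porbit_id.
  by rewrite inE /= pi_eq merge_then_split.
- case=> [[x y]]; rewrite inE /= => /andP[xpy xy] ->.
  by have := merge_covers k (split_then_merge xpy xy); rewrite tpermKg.
Qed.

(* Double counting: each lower cover arises from two ordered pairs. *)
Lemma card_covered (pi : 'S_n) :
  (#|[set sigma : 'S_n | `[< star_covers k pi sigma >]]|).*2
  = \sum_(c in porbits pi) (n - #|c|) * #|c|.
Proof.
rewrite covered_set (@card_tperm_image _ (fun x y => x \notin porbit pi y)).
- rewrite (sum_over_cycles pi (fun len => n - len)); apply: eq_bigr => x _.
  have -> : #|[set y | x \notin porbit pi y]| = #|~: porbit pi x|.
    by apply: eq_card => y; rewrite !inE porbit_sym.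
  by have := cardsC (porbit pi x); rewrite card_ord; lia.
- by move=> x y; rewrite /= porbit_sym.
- by move=> x; rewrite /= porbit_id.
Qed.

(* Double counting: each upper cover arises from two ordered pairs. *)
Lemma card_covering (pi : 'S_n) :
  (#|[set tau : 'S_n | `[< star_covers k tau pi >]]|).*2
  = \sum_(c in porbits pi) (#|c| - 1) * #|c|.
Proof.
rewrite covering_set.
rewrite (@card_tperm_image _ (fun x y => (x \in porbit pi y) && (x != y))).
- rewrite (sum_over_cycles pi (fun len => len - 1)); apply: eq_bigr => x _.
  rewrite (cardsD1 x (porbit pi x)) porbit_id add1n subSS subn0.
  by apply: eq_card => y; rewrite !inE porbit_sym andbC eq_sym.
- by move=> x y; rewrite /= porbit_sym eq_sym.
- by move=> x; rewrite /= eqxx andbF.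
Qed.

End CoverSets.

Section PairSums.
Local Open Scope nat_scope.
Variable a : nat -> nat.

Lemma sum_pairs_step M :
  \sum_(i < M.+1) \sum_(j < M.+1 | i < j) a i * a j
  = \sum_(i < M) \sum_(j < M | i < j) a i * a j + (\sum_(i < M) a i) * a M.
Proof.
rewrite big_ord_recr /= [X in _ + X]big_pred0 => [|j]; last first.
  by rewrite ltnNge -ltnS ltn_ord.
rewrite addn0 big_distrl -big_split; apply: eq_bigr => i _ /=.
by rewrite big_mkcond big_ord_recr /= ltn_ord -big_mkcond.
Qed.

Lemma sum_pairs_square M :
  (\sum_(i < M) \sum_(j < M | i < j) a i * a j).*2 + \sum_(i < M) a i * a i
  = (\sum_(i < M) a i) * (\sum_(i < M) a i).
Proof.
elim: M => [|M IH]; first by rewrite !big_ord0.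
rewrite sum_pairs_step !big_ord_recr /=; move: IH.
set S := \sum_(i < M) \sum_(j < M | i < j) _; set A := \sum_(i < M) a i; set Q := \sum_(i < M) a i * a i.
rewrite doubleD -!muln2 !mulnDl !mulnDr; lia.
Qed.

Lemma sum_pairs_double M :
  (\sum_(i < M) \sum_(j < M | i < j) a i * a j).*2
  = \sum_(i < M) (\sum_(j < M) a j - a i) * a i.
Proof.
set A := \sum_(j < M) a j.
have split_square :
    \sum_(i < M) ((A - a i) * a i + a i * a i) = A * \sum_(i < M) a i.
  rewrite big_distrr /=; apply: eq_bigr => i _.
  have le_aA : a i <= A by rewrite /A (bigD1 i) //= leq_addr.
  by rewrite -mulnDl subnK.
have := sum_pairs_square M; move: split_square; rewrite big_split /= -/A; nia.
Qed.

End PairSums.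

Lemma bin2_double l : ('C(l, 2)).*2 = ((l - 1) * l)%N.
Proof. by elim: l => [//|l IH]; rewrite binS bin1 doubleD IH; nia. Qed.

Unset Implicit Arguments.
Set Strict Implicit.

Theorem mainTheorem13 (n : nat) (k : 'I_n) (pi : 'S_n) :
  let l := cycle_lengths pi in
  let m := size l in
  #|[set sigma : 'S_n | `[< star_covers k pi sigma >]]|
    = (\sum_(i < m) \sum_(j < m | (i < j)%N) nth 0 l i * nth 0 l j)%N
  /\
  #|[set tau : 'S_n | `[< star_covers k tau pi >]]|
    = (\sum_(i < m) 'C(nth 0 l i, 2))%N.
Proof.
move=> l m; subst l m; split; apply: double_inj.
- rewrite card_covered sum_pairs_double cycle_lengths_total.
  by rewrite (sum_cycle_lengths pi (fun len => (n - len) * len)%N).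
- rewrite card_covering -muln2 big_distrl /=.
  rewrite (sum_cycle_lengths pi (fun len => 'C(len, 2) * 2)%N).
  by apply: eq_bigr => c _; rewrite muln2 bin2_double.
Qed.
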